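(* For every parameter $\rho\in\{\mathrm{sn},\underline{\mathrm{lcs}},\overline{\mathrm{scs}},\overline{\mathrm{lcs}}\}$ and every $N>0$, there exist graphs $H\subsetneq G$ ($H$ a proper subgraph of $G$) with $\chi(H)=\chi(G)$ such that $\rho(H)>N\rho(G)$.
   Context: All graphs are finite and simple. For a graph $G=(V,E)$ with $k=\chi(G)$, a proper $k$-colouring is a map $c:V\to[k]$ with $c(u)\neq c(v)$ for every edge $uv$. A set $S\subseteq V$ is a determining set for $(G,c)$ if there is no proper $k$-colouring $c'\neq c$ with $c'(s)=c(s)$ for all $s\in S$; a critical set is an inclusion-minimal determining set. $\mathrm{scs}(G,c)$ and $\mathrm{lcs}(G,c)$ are the sizes of a smallest resp. largest critical set for $(G,c)$. Over all proper $\chi(G)$-colourings $c$: $\mathrm{sn}(G)=\min_c\mathrm{scs}(G,c)$, $\underline{\mathrm{lcs}}(G)=\min_c\mathrm{lcs}(G,c)$, $\overline{\mathrm{scs}}(G)=\max_c\mathrm{scs}(G,c)$, $\overline{\mathrm{lcs}}(G)=\max_c\mathrm{lcs}(G,c)$. *)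

From mathcomp Require Import all_boot.
Set Implicit Arguments. Unset Strict Implicit. Unset Printing Implicit Defensive.

Record sgraph := SGraph {
  vert : finType;
  adj : rel vert;
  adj_sym : symmetric adj;
  adj_irr : irreflexive adj }.

Section Params.
Variable G : sgraph.
Notation V := (vert G).

Definition proper_col k (c : {ffun V -> 'I_k}) : bool :=
  [forall u, forall v, adj u v ==> (c u != c v)].

Definition colourable k : bool := [exists c : {ffun V -> 'I_k}, proper_col c].

(* chromatic number: least k such that G has a proper k-colouring
   (k = #|V| always works, so the search in [0, #|V|] succeeds). *)
Definition chi : nat := find colourable (iota 0 #|V|.+1).

Definition determining (c : {ffun V -> 'I_chi}) (S : {set V}) : bool :=
  [forall c' : {ffun V -> 'I_chi},
     (proper_col c' && [forall s in S, c' s == c s]) ==> (c' == c)].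

Definition critical (c : {ffun V -> 'I_chi}) (S : {set V}) : bool :=
  minset (determining c) S.

(* smallest / largest critical set size (critical sets exist, e.g. inside
   [set: V]; every critical set has size <= #|V|, so #|V| is a neutral
   initial value for the min) *)
Definition scs (c : {ffun V -> 'I_chi}) : nat :=
  \big[minn/#|V|]_(S : {set V} | critical c S) #|S|.
Definition lcs (c : {ffun V -> 'I_chi}) : nat :=
  \max_(S : {set V} | critical c S) #|S|.

Definition sn : nat := \big[minn/#|V|]_(c | proper_col c) scs c.
Definition lcs_under : nat := \big[minn/#|V|]_(c | proper_col c) lcs c.
Definition scs_over : nat := \max_(c | proper_col c) scs c.
Definition lcs_over : nat := \max_(c | proper_col c) lcs c.

End Params.

Inductive param := P_sn | P_lcs_under | P_scs_over | P_lcs_over.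

Definition rho (p : param) (G : sgraph) : nat :=
  match p with
  | P_sn => sn G
  | P_lcs_under => lcs_under G
  | P_scs_over => scs_over G
  | P_lcs_over => lcs_over G
  end.

(* H is (isomorphic to) a proper subgraph of G: an injective vertex map
   sending edges of H to edges of G, which is not an isomorphism onto G
   (some vertex of G is missed, or some edge of G between image vertices
   is not an edge of H). *)
Definition proper_subgraph (H G : sgraph) : Prop :=
  exists f : vert H -> vert G,
    [/\ injective f,
        (forall x y, adj x y -> adj (f x) (f y)) &
        ((exists v, forall w, f w != v) \/
         (exists x y, adj (f x) (f y) && ~~ adj x y))].

From mathcomp Require Import all_boot zify.
Set Implicit Arguments. Unset Strict Implicit. Unset Printing Implicit Defensive.

(* Take H = one edge plus n isolated vertices and G = the star K_{1,n+1}
   on the same n + 2 vertices; both have chromatic number 2.  In H any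
   colour permutation may be applied independently on each component, so a
   determining set must meet each of the n + 1 components.  In G, which is
   connected and bipartite, the colour of one vertex forces all others, so
   every critical set is a singleton.  Hence all four parameters are at
   least n + 1 on H and at most 1 on G. *)

Lemma geq_bigmin_cond (I : finType) (P : pred I) (F : I -> nat) x i :
  P i -> \big[minn/x]_(j | P j) F j <= F i.
Proof.
move=> Pi; rewrite -big_filter.
have : i \in [seq j <- index_enum I | P j] by rewrite mem_filter Pi mem_index_enum.
elim: [seq j <- index_enum I | P j] => //= a s IHs; rewrite in_cons big_cons.
case/orP => [/eqP <-|/IHs]; first exact: geq_minl.
exact: leq_trans (geq_minr _ _).
Qed.

Lemma leq_bigmin (I : finType) (P : pred I) (F : I -> nat) x m :
  m <= x -> (forall i, P i -> m <= F i) -> m <= \big[minn/x]_(j | P j) F j.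
Proof.
move=> mx mF; apply: (big_ind (fun y => m <= y)) => // a b ma mb.
by rewrite leq_min ma mb.
Qed.

Lemma ordS_neq k (i : 'I_k) : 1 < k -> ordS i != i.
Proof.
case: i => i lt_ik k_gt1; rewrite -val_eqE /=.
have [lt_Sik|ge_Sik] := ltnP i.+1 k.
  by rewrite modn_small // neq_ltn ltnSn orbT.
have k_eq : i.+1 = k by apply/eqP; rewrite eqn_leq ge_Sik lt_ik.
by rewrite -k_eq modnn eq_sym -lt0n -ltnS k_eq.
Qed.

Lemma ord2_eq k (a b d : 'I_k) : k <= 2 -> a != b -> d != b -> a = d.
Proof.
move=> k_le2; rewrite -!val_eqE /= => ab db; apply: val_inj => /=.
by move: (ltn_ord a) (ltn_ord b) (ltn_ord d) ab db; lia.
Qed.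

Section Colourings.
Variable K : sgraph.
Notation V := (vert K).

Lemma proper_colP k (c : {ffun V -> 'I_k}) :
  reflect (forall u v, adj u v -> c u != c v) (proper_col c).
Proof.
apply: (iffP forallP) => [Pc u v | Pc u]; last first.
  by apply/forallP => v; apply/implyP; apply: Pc.
by move/forallP: (Pc u) => /(_ v) /implyP.
Qed.

Lemma proper_col_neq k (c : {ffun V -> 'I_k}) u v :
  proper_col c -> adj u v -> c u != c v.
Proof. by move/proper_colP; apply. Qed.

Lemma colourable_card : colourable K #|V|.
Proof.
apply/existsP; exists [ffun v => enum_rank v]; apply/proper_colP => u v uv.
rewrite !ffunE (inj_eq enum_rank_inj); apply: contraTneq uv => ->.
by rewrite adj_irr.
Qed.

Lemma chi_colourable : colourable K (chi K).
Proof.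
have has_col : has (colourable K) (iota 0 #|V|.+1).
  by apply/hasP; exists #|V|; [rewrite mem_iota add0n ltnS leqnn | exact: colourable_card].
have chi_lt : chi K < #|V|.+1 by rewrite -[X in _ < X](size_iota 0) -has_find.
by have := nth_find 0 has_col; rewrite nth_iota.
Qed.

Lemma chi_eq k :
  colourable K k -> (forall j, j < k -> ~~ colourable K j) -> chi K = k.
Proof.
move=> col_k min_k.
have k_le : k <= #|V|.
  by rewrite leqNgt; apply/negP => /min_k; rewrite colourable_card.
have [lt_chi|gt_chi|//] := ltngtP (chi K) k.
  by have := min_k _ lt_chi; rewrite chi_colourable.
have := before_find 0 (gt_chi : k < find (colourable K) (iota 0 #|V|.+1)).
by rewrite nth_iota ?ltnS // add0n col_k.
Qed.

Lemma chi_eq2 (u v : V) : adj u v -> colourable K 2 -> chi K = 2.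
Proof.
move=> uv col2; apply: chi_eq => // -[|[|//]] _; apply/existsP => -[c Pc].
  by case: (c u).
by have := proper_col_neq Pc uv; rewrite (ord1 (c u)) (ord1 (c v)).
Qed.

Lemma determiningT (c : {ffun V -> 'I_(chi K)}) : determining c setT.
Proof.
apply/forallP => c'; apply/implyP => /andP [_ /forall_inP agree].
by apply/eqP/ffunP => x; apply/eqP/agree; rewrite in_setT.
Qed.

Lemma exists_critical (c : {ffun V -> 'I_(chi K)}) : exists S, critical c S.
Proof. by have [S crit_S _] := minset_exists (determiningT c); exists S. Qed.

Lemma exists_proper_col : exists c : {ffun V -> 'I_(chi K)}, proper_col c.
Proof. exact/existsP/chi_colourable. Qed.

Lemma rho_leq p m :
  (forall c : {ffun V -> 'I_(chi K)}, proper_col c ->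
     forall S, critical c S -> #|S| <= m) ->
  rho p K <= m.
Proof.
move=> crit_le; have [c0 Pc0] := exists_proper_col.
have scs_le (c : {ffun V -> 'I_(chi K)}) : proper_col c -> scs c <= m.
  move=> Pc; have [S crit_S] := exists_critical c.
  exact: leq_trans (geq_bigmin_cond _ _ crit_S) (crit_le _ Pc _ crit_S).
have lcs_le (c : {ffun V -> 'I_(chi K)}) : proper_col c -> lcs c <= m.
  by move=> Pc; apply/bigmax_leqP => S; apply: crit_le.
case: p => /=.
- exact: leq_trans (geq_bigmin_cond _ _ Pc0) (scs_le _ Pc0).
- exact: leq_trans (geq_bigmin_cond _ _ Pc0) (lcs_le _ Pc0).
- exact/bigmax_leqP.
- exact/bigmax_leqP.
Qed.

Lemma rho_geq p m :
  (forall c : {ffun V -> 'I_(chi K)}, proper_col c ->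
     forall S, determining c S -> m <= #|S|) ->
  m <= rho p K.
Proof.
move=> det_ge; have [c0 Pc0] := exists_proper_col.
have m_le : m <= #|V| by rewrite -cardsT; apply: det_ge Pc0 _ (determiningT c0).
have scs_ge (c : {ffun V -> 'I_(chi K)}) : proper_col c -> m <= scs c.
  by move=> Pc; apply: leq_bigmin => // S /minsetp; apply: det_ge.
have lcs_ge (c : {ffun V -> 'I_(chi K)}) : proper_col c -> m <= lcs c.
  move=> Pc; have [S crit_S] := exists_critical c.
  exact: leq_trans (det_ge _ Pc _ (minsetp crit_S)) (leq_bigmax_cond _ crit_S).
case: p => /=.
- exact: leq_bigmin.
- exact: leq_bigmin.
- exact: leq_trans (scs_ge _ Pc0) (leq_bigmax_cond _ Pc0).
- exact: leq_trans (lcs_ge _ Pc0) (leq_bigmax_cond _ Pc0).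
Qed.

Lemma determining_meets_closed (c : {ffun V -> 'I_(chi K)}) S (A : {set V}) :
  1 < chi K -> proper_col c -> A != set0 ->
  (forall u v, adj u v -> (u \in A) = (v \in A)) ->
  determining c S -> A :&: S != set0.
Proof.
move=> chi_gt1 Pc /set0Pn [a aA] closed_A /forallP det; apply/negP => /eqP AS0.
pose c' := [ffun x => if x \in A then ordS (c x) else c x].
have /eqP/ffunP/(_ a) : c' == c.
  apply: (implyP (det c')); apply/andP; split.
    apply/proper_colP => u v uv; rewrite !ffunE -(closed_A _ _ uv).
    by case: ifP => _; rewrite ?(inj_eq (@ordS_inj _)); apply: proper_col_neq Pc uv.
  apply/forall_inP => s sS; rewrite ffunE; case: ifPn => // sA.
  by have := in_set0 s; rewrite -AS0 inE sA sS.
by rewrite ffunE aA; apply/eqP/ordS_neq.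
Qed.

Lemma proper_col2_agree k (c c' : {ffun V -> 'I_k}) x y :
  k <= 2 -> proper_col c -> proper_col c' -> adj x y ->
  c' y = c y -> c' x = c x.
Proof.
move=> k_le2 Pc Pc' xy eq_y; apply: esym (ord2_eq k_le2 (proper_col_neq Pc xy) _).
by rewrite -eq_y; apply: proper_col_neq Pc' xy.
Qed.

Lemma critical_card_le1 (c : {ffun V -> 'I_(chi K)}) S :
  (forall s, determining c [set s]) -> critical c S -> #|S| <= 1.
Proof.
move=> det1 crit_S; have [->|[s sS]] := set_0Vmem S; first by rewrite cards0.
by rewrite -(minsetinf crit_S (det1 s)) ?cards1 ?sub1set.
Qed.

End Colourings.

Section SingleEdgeAndStar.
Variable n : nat.

Definition single_edge_adj : rel 'I_n.+2 := fun x y => x + y == 1.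
Definition star_adj : rel 'I_n.+2 := fun x y => (x == 0 :> nat) != (y == 0 :> nat).

Lemma single_edge_adj_sym : symmetric single_edge_adj.
Proof. by move=> x y; rewrite /single_edge_adj addnC. Qed.

Lemma single_edge_adj_irr : irreflexive single_edge_adj.
Proof. by move=> x; apply/negbTE/negP => /eqP; lia. Qed.

Lemma star_adj_sym : symmetric star_adj.
Proof. by move=> x y; rewrite /star_adj eq_sym. Qed.

Lemma star_adj_irr : irreflexive star_adj.
Proof. by move=> x; rewrite /star_adj eqxx. Qed.

Definition single_edge := SGraph single_edge_adj_sym single_edge_adj_irr.
Definition star := SGraph star_adj_sym star_adj_irr.

Lemma single_edge_adj_lt2 x y : single_edge_adj x y -> x < 2 /\ y < 2.
Proof. by move/eqP; lia. Qed.

Lemma single_edge_adj_star x y : single_edge_adj x y -> star_adj x y.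
Proof.
by case: x y => [[|[|x]] ?] [[|[|y]] ?]; rewrite /single_edge_adj /star_adj.
Qed.

Lemma single_edge_proper_sub_star : 0 < n -> proper_subgraph single_edge star.
Proof.
move=> n_gt0; exists id; split => //; first exact: single_edge_adj_star.
by right; exists ord0, (Ordinal (n_gt0 : 2 < n.+2)).
Qed.

Definition star_col : {ffun 'I_n.+2 -> 'I_2} :=
  [ffun x : 'I_n.+2 => if x == 0 :> nat then ord0 else ord_max].

Lemma star_col_proper : @proper_col star 2 star_col.
Proof.
apply/proper_colP => u v; rewrite /= /star_adj !ffunE.
by case: (_ == 0); case: (_ == 0).
Qed.

Lemma star_col_proper_single_edge : @proper_col single_edge 2 star_col.
Proof.
apply/proper_colP => u v /single_edge_adj_star; exact: proper_col_neq star_col_proper.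
Qed.

Definition vertex1 : 'I_n.+2 := Ordinal (isT : 1 < n.+2).

Lemma chi_star : chi star = 2.
Proof.
apply: (@chi_eq2 star ord0 vertex1) => //.
by apply/existsP; exists star_col; exact: star_col_proper.
Qed.

Lemma chi_single_edge : chi single_edge = 2.
Proof.
apply: (@chi_eq2 single_edge ord0 vertex1) => //.
by apply/existsP; exists star_col; exact: star_col_proper_single_edge.
Qed.

Lemma single_edge_determining_card (c : {ffun vert single_edge -> 'I_(chi single_edge)}) S :
  proper_col c -> determining c S -> n.+1 <= #|S|.
Proof.
move=> Pc det_S.
have chi_gt1 : 1 < chi single_edge by rewrite chi_single_edge.
have meets (A : {set 'I_n.+2}) : A != set0 ->
    (forall u v, single_edge_adj u v -> (u \in A) = (v \in A)) -> A :&: S != set0.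
  by move=> A0 closed_A; apply: determining_meets_closed chi_gt1 Pc A0 closed_A det_S.
have isolated_in_S (v : 'I_n.+2) : 1 < v -> v \in S.
  move=> v_gt1; have /set0Pn [x] : [set v] :&: S != set0.
    apply: meets; first by apply/set0Pn; exists v; rewrite inE.
    move=> u w /single_edge_adj_lt2 [u_lt2 w_lt2]; rewrite !inE -!val_eqE.
    by rewrite !ltn_eqF ?(leq_trans u_lt2) ?(leq_trans w_lt2).
  by rewrite !inE => /andP [/eqP ->].
have [w] : exists w, w \in [set x : 'I_n.+2 | x < 2] :&: S.
  apply/set0Pn/meets; first by apply/set0Pn; exists ord0; rewrite inE.
  by move=> u v /single_edge_adj_lt2 [u_lt2 v_lt2]; rewrite !inE u_lt2 v_lt2.
rewrite !inE => /andP [w_lt2 wS].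
pose w' : 'I_n.+2 := Ordinal (leq_ltn_trans (leq_subr w 1) (isT : 1 < n.+2)).
have sub_S : [set~ w'] \subset S.
  apply/subsetP => x; rewrite !inE => x_neq_w'.
  have [x_lt2|/isolated_in_S //] := ltnP x 2.
  have -> : x = w by apply: val_inj; move: x_neq_w'; rewrite -val_eqE /=; lia.
  exact: wS.
by apply: leq_trans (subset_leq_card sub_S); rewrite cardsC1 card_ord.
Qed.

Lemma star_determining1 (c : {ffun vert star -> 'I_(chi star)}) s :
  proper_col c -> determining c [set s].
Proof.
move=> Pc; apply/forallP => c'; apply/implyP => /andP [Pc' /forall_inP agree].
have chi_le2 : chi star <= 2 by rewrite chi_star.
have agree_adj (x y : 'I_n.+2) : star_adj x y -> c' y = c y -> c' x = c x.
  exact: proper_col2_agree chi_le2 Pc Pc'.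
have agree_s : c' s = c s by apply/eqP/agree; rewrite inE.
have agree_0 : c' ord0 = c ord0.
  have [s0|s_neq0] := eqVneq (s : nat) 0.
    by have -> : ord0 = s by apply: val_inj.
  by apply: agree_adj agree_s; rewrite /star_adj (negbTE s_neq0).
apply/eqP/ffunP => x; have [x0|x_neq0] := eqVneq (x : nat) 0.
  by have -> : x = ord0 by apply: val_inj.
by apply: agree_adj agree_0; rewrite /star_adj (negbTE x_neq0).
Qed.

End SingleEdgeAndStar.

Theorem proposition5 :
  forall (p : param) (N : nat), 0 < N ->
  exists H G : sgraph,
    [/\ proper_subgraph H G, chi H = chi G & rho p H > N * rho p G].
Proof.
move=> p N N_gt0; exists (single_edge N), (star N); split.
- exact: single_edge_proper_sub_star.
- by rewrite chi_single_edge chi_star.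
have rho_star : rho p (star N) <= 1.
  apply: rho_leq => c Pc S; apply: critical_card_le1 => s.
  exact: star_determining1.
have rho_single_edge : N.+1 <= rho p (single_edge N).
  by apply: rho_geq => c Pc S; apply: single_edge_determining_card.
apply: leq_trans rho_single_edge.
by rewrite ltnS -[X in _ <= X]muln1 leq_mul2l rho_star orbT.
Qed.
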